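(* Let $S$ be a $\Gamma$-semiring with zero having a left unity and a right unity, and let $L$ be its left operator semiring. Let $\sigma,\sigma_1,\sigma_2\in FI(S)$ and $\mu,\mu_1,\mu_2\in FI(L)$. Then: (i) $\sigma^{+'}\in FI(L)$; moreover, if $\sigma$ is non-constant then $\sigma^{+'}$ is non-constant; (ii) $(\sigma^{+'})^{+}=\sigma$; (iii) $\sigma_1\neq\sigma_2$ implies $\sigma_1^{+'}\neq\sigma_2^{+'}$; (iv) $(\sigma_1\oplus\sigma_2)^{+'}=\sigma_1^{+'}\oplus\sigma_2^{+'}$; (v) $(\sigma_1\cap\sigma_2)^{+'}=\sigma_1^{+'}\cap\sigma_2^{+'}$; (vi) $\sigma_1\subseteq\sigma_2$ implies $\sigma_1^{+'}\subseteq\sigma_2^{+'}$; (vii) $\mu^{+}\in FI(S)$; moreover, if $\mu$ is non-constant then $\mu^{+}$ is non-constant; (viii) $(\mu^{+})^{+'}=\mu$; (ix) $\mu_1\subseteq\mu_2$ implies $\mu_1^{+}\subseteq\mu_2^{+}$.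
   Context: A $\Gamma$-semiring: $S$ and $\Gamma$ are additive commutative semigroups with a map $S\times\Gamma\times S\to S$, $(a,\alpha,b)\mapsto a\alpha b$, such that $(a+b)\alpha c=a\alpha c+b\alpha c$, $a\alpha(b+c)=a\alpha b+a\alpha c$, $a(\alpha+\beta)b=a\alpha b+a\beta b$, $a\alpha(b\beta c)=(a\alpha b)\beta c$. With zero: $(S,+)$, $(\Gamma,+)$ are monoids, $0_S\alpha x=0_S=x\alpha0_S$, $x0_\Gamma y=0_S$. Left operator semiring $L$: $F$ is the free additive commutative semigroup on $S\times\Gamma$; $\sum_i(x_i,\alpha_i)\,\rho\,\sum_j(y_j,\beta_j)$ iff $\sum_ix_i\alpha_ia=\sum_jy_j\beta_ja$ for all $a\in S$; $L=F/\rho$, classes written $\sum_i[x_i,\alpha_i]$, with multiplication $(\sum_i[x_i,\alpha_i])(\sum_j[y_j,\beta_j])=\sum_{i,j}[x_i\alpha_iy_j,\beta_j]$; its zero is $[0,\gamma]$ (any $\gamma\in\Gamma$). A left unity of $S$ is $\sum_i[e_i,\delta_i]\in L$ with $\sum_ie_i\delta_ia=a$ for all $a\in S$; a right unity is a finite family $\gamma_j\in\Gamma,f_j\in S$ with $\sum_ja\gamma_jf_j=a$ for all $a\in S$. A fuzzy subset is a map into $[0,1]$. A fuzzy ideal of $S$ is a fuzzy subset $\mu$, not identically $0$, with $\mu(x+y)\ge\min[\mu(x),\mu(y)]$, $\mu(x\gamma y)\ge\mu(y)$ and $\mu(x\gamma y)\ge\mu(x)$ for all $x,y\in S,\gamma\in\Gamma$.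 A fuzzy ideal of the semiring $L$ is a fuzzy subset $\mu$, not identically $0$, with $\mu(p+q)\ge\min[\mu(p),\mu(q)]$, $\mu(pq)\ge\mu(q)$, $\mu(pq)\ge\mu(p)$. Convention: every fuzzy ideal of $S$ or of $L$ is assumed to satisfy $\mu(0)=1$. $FI(S)$, $FI(L)$ denote the sets of fuzzy ideals. For a fuzzy subset $\mu$ of $L$: $\mu^{+}(x)=\inf_{\gamma\in\Gamma}\mu([x,\gamma])$ ($x\in S$). For a fuzzy subset $\sigma$ of $S$: $\sigma^{+'}(\sum_i[x_i,\alpha_i])=\inf_{s\in S}\sigma(\sum_ix_i\alpha_is)$. For fuzzy ideals $\mu_1,\mu_2$ (of $S$, resp. of $L$): $(\mu_1\oplus\mu_2)(x)=\sup\{\min[\mu_1(u),\mu_2(v)]:x=u+v\}$; $\cap$ is the pointwise minimum and $\subseteq$ is pointwise $\le$. *)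

From mathcomp Require Import all_boot all_order all_algebra.
From mathcomp Require Import boolp classical_sets reals.
Set Implicit Arguments. Unset Strict Implicit. Unset Printing Implicit Defensive.
Import Order.TTheory GRing.Theory Num.Theory.
Local Open Scope ring_scope.
Local Open Scope classical_set_scope.

Section GammaSemiring.
Variables (S G : nmodType) (tm : S -> G -> S -> S).

Definition gamma_semiring_zero : Prop :=
  [/\ (forall a b c al, tm (a + b) al c = tm a al c + tm b al c),
      (forall a b c al, tm a al (b + c) = tm a al b + tm a al c),
      (forall a b al be, tm a (al + be) b = tm a al b + tm a be b),
      (forall a b c al be, tm a al (tm b be c) = tm (tm a al b) be c) &
      (forall x y al, [/\ tm 0 al x = 0, tm x al 0 = 0 & tm x 0 y = 0])].

Definition opfun (l : seq (S * G)) : S -> S :=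
  fun a => \sum_(p <- l) tm p.1 p.2 a.

(* Left operator semiring: L = F / rho.  Two formal sums are rho-related iff
   they have the same operator, so the class of l is identified with opfun l. *)
Definition L := {f : S -> S | exists l : seq (S * G), f = opfun l}.

Definition cls (l : seq (S * G)) : L := exist _ (opfun l) (ex_intro _ l erefl).

Definition rep (p : L) : seq (S * G) :=
  proj1_sig (cid (proj2_sig p)).

Definition Ladd (p q : L) : L := cls (rep p ++ rep q).
Definition lmul (l1 l2 : seq (S * G)) : seq (S * G) :=
  [seq (tm x.1 x.2 y.1, y.2) | x <- l1, y <- l2].
Definition Lmul (p q : L) : L := cls (lmul (rep p) (rep q)).
Definition Lzero : L := cls [:: (0, 0)].

Definition has_left_unity : Prop :=
  exists l : seq (S * G), forall a, \sum_(p <- l) tm p.1 p.2 a = a.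
Definition has_right_unity : Prop :=
  exists r : seq (G * S), forall a, \sum_(p <- r) tm a p.1 p.2 = a.

Variable R : realType.

Definition fuzzy (T : Type) (m : T -> R) : Prop := forall x, 0 <= m x <= 1.

Definition FI_S (s : S -> R) : Prop :=
  [/\ fuzzy s, exists x, s x != 0,
      forall x y, s (x + y) >= Num.min (s x) (s y),
      forall x y al, s (tm x al y) >= s y /\ s (tm x al y) >= s x
    & s 0 = 1].

Definition FI_L (m : L -> R) : Prop :=
  [/\ fuzzy m, exists x, m x != 0,
      forall p q, m (Ladd p q) >= Num.min (m p) (m q),
      forall p q, m (Lmul p q) >= m q /\ m (Lmul p q) >= m p
    & m Lzero = 1].

Definition plus (m : L -> R) : S -> R :=
  fun x => inf [set m (cls [:: (x, g)]) | g in [set: G]].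

Definition plus' (s : S -> R) : L -> R :=
  fun p => inf [set s (proj1_sig p a) | a in [set: S]].

Definition oplusS (s1 s2 : S -> R) : S -> R :=
  fun x => sup [set r | exists u v, x = u + v /\ r = Num.min (s1 u) (s2 v)].
Definition oplusL (m1 m2 : L -> R) : L -> R :=
  fun x => sup [set r | exists u v, x = Ladd u v /\ r = Num.min (m1 u) (m2 v)].

Definition capf (T : Type) (m1 m2 : T -> R) : T -> R :=
  fun x => Num.min (m1 x) (m2 x).
Definition subf (T : Type) (m1 m2 : T -> R) : Prop := forall x, m1 x <= m2 x.
Definition nonconstant (T : Type) (m : T -> R) : Prop := exists x y, m x <> m y.

End GammaSemiring.

Arguments FI_L {S G} tm {R} m.
Arguments plus {S G} tm {R} m x.
Arguments plus' {S G} tm {R} s p.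
Arguments oplusL {S G} tm {R} m1 m2 x.

From mathcomp Require Import all_boot all_order all_algebra.
From mathcomp Require Import boolp classical_sets reals.
Set Implicit Arguments. Unset Strict Implicit. Unset Printing Implicit Defensive.
Import Order.TTheory GRing.Theory Num.Theory.
Local Open Scope ring_scope.
Local Open Scope classical_set_scope.

(* An element p of L acts on S as the additive map a |-> sum_i x_i alpha_i a,
   which commutes with right Gamma-multiplication, so sigma(p a) >= sigma(a)
   for a fuzzy ideal sigma.  A right unity writes x = sum_j x gamma_j f_j and a
   left unity writes p = sum_i [p e_i, delta_i]; since a fuzzy ideal is bounded
   below on a finite sum by the minimum over the summands, these identities make
   sigma |-> sigma^+' and mu |-> mu^+ mutually inverse.  For the sum (+), an
   epsilon-optimal splitting of each p e_i, reassembled through the left unity,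
   splits p itself into two operators witnessing the supremum up to epsilon. *)

Section LeftOperatorSemiring.
Variables (S G : nmodType) (tm : S -> G -> S -> S).
Hypothesis HS : gamma_semiring_zero tm.

Lemma tmDl a b al c : tm (a + b) al c = tm a al c + tm b al c.
Proof. by case: HS. Qed.

Lemma tmDr a al b c : tm a al (b + c) = tm a al b + tm a al c.
Proof. by case: HS. Qed.

Lemma tmA a al b be c : tm a al (tm b be c) = tm (tm a al b) be c.
Proof. by case: HS. Qed.

Lemma tm0l al c : tm 0 al c = 0.
Proof. by case: HS => _ _ _ _ /(_ c c al) []. Qed.

Lemma tmr0 a al : tm a al 0 = 0.
Proof. by case: HS => _ _ _ _ /(_ a a al) []. Qed.

Lemma tm_suml (I : Type) (r : seq I) (F : I -> S) al c :
  tm (\sum_(i <- r) F i) al c = \sum_(i <- r) tm (F i) al c.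
Proof.
by rewrite (big_morph (fun a => tm a al c) (fun a b => tmDl a b al c) (tm0l al c)).
Qed.

Lemma tm_sumr (I : Type) (r : seq I) (F : I -> S) a al :
  tm a al (\sum_(i <- r) F i) = \sum_(i <- r) tm a al (F i).
Proof. by rewrite (big_morph (tm a al) (tmDr a al) (tmr0 a al)). Qed.

Lemma opfun1 x g a : opfun tm [:: (x, g)] a = tm x g a.
Proof. by rewrite /opfun big_seq1. Qed.

Lemma opfun_cat l1 l2 a : opfun tm (l1 ++ l2) a = opfun tm l1 a + opfun tm l2 a.
Proof. by rewrite /opfun big_cat. Qed.

Lemma opfun_lmul l1 l2 a :
  opfun tm (lmul tm l1 l2) a = opfun tm l1 (opfun tm l2 a).
Proof.
rewrite /opfun /lmul big_allpairs_dep; apply: eq_bigr => x _.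
by rewrite tm_sumr; apply: eq_bigr => y _; rewrite tmA.
Qed.

Lemma svalE (p : L tm) : sval p = opfun tm (rep p).
Proof. exact: (proj2_sig (cid (proj2_sig p))). Qed.

Lemma svalD (p : L tm) a b : sval p (a + b) = sval p a + sval p b.
Proof.
by rewrite svalE /opfun -big_split; apply: eq_bigr => q _; rewrite tmDr.
Qed.

Lemma sval0 (p : L tm) : sval p 0 = 0.
Proof. by rewrite svalE /opfun big1 // => q _; rewrite tmr0. Qed.

Lemma sval_sum (p : L tm) (I : Type) (r : seq I) (F : I -> S) :
  sval p (\sum_(i <- r) F i) = \sum_(i <- r) sval p (F i).
Proof. by rewrite (big_morph (sval p) (svalD p) (sval0 p)). Qed.

Lemma svalA (p : L tm) a al b : sval p (tm a al b) = tm (sval p a) al b.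
Proof.
by rewrite svalE /opfun tm_suml; apply: eq_bigr => q _; rewrite tmA.
Qed.

Lemma L_ext (p q : L tm) : sval p =1 sval q -> p = q.
Proof.
case: p q => [f hf] [g hg] /= /funext fg; subst g.
by congr exist; apply: Prop_irrelevance.
Qed.

Lemma Ladd_sval (p q : L tm) a : sval (Ladd p q) a = sval p a + sval q a.
Proof. by rewrite /= opfun_cat -!svalE. Qed.

Lemma Lmul_sval (p q : L tm) a : sval (Lmul p q) a = sval p (sval q a).
Proof. by rewrite /= opfun_lmul -!svalE. Qed.

Lemma Lzero_sval a : sval (Lzero tm) a = 0.
Proof. by rewrite /= opfun1 tm0l. Qed.

Lemma Lsum_sval (I : Type) (r : seq I) (F : I -> L tm) a :
  sval (\big[@Ladd _ _ tm/Lzero tm]_(i <- r) F i) a = \sum_(i <- r) sval (F i) a.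
Proof.
by rewrite (big_morph (sval^~ a) (fun p q => Ladd_sval p q a) (Lzero_sval a)).
Qed.

Lemma cls1_sval x g a : sval (cls tm [:: (x, g)]) a = tm x g a.
Proof. exact: opfun1. Qed.

Lemma cls10 g : cls tm [:: (0, g)] = Lzero tm.
Proof. by apply: L_ext => a; rewrite cls1_sval Lzero_sval tm0l. Qed.

Lemma cls1D x y g :
  cls tm [:: (x + y, g)] = Ladd (cls tm [:: (x, g)]) (cls tm [:: (y, g)]).
Proof. by apply: L_ext => a; rewrite Ladd_sval !cls1_sval tmDl. Qed.

Lemma cls1_tm x al y g :
  cls tm [:: (tm x al y, g)] = Lmul (cls tm [:: (x, al)]) (cls tm [:: (y, g)]).
Proof. by apply: L_ext => a; rewrite Lmul_sval !cls1_sval tmA. Qed.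

Lemma cls1_sval_mul (p : L tm) a g :
  cls tm [:: (sval p a, g)] = Lmul p (cls tm [:: (a, g)]).
Proof. by apply: L_ext => b; rewrite Lmul_sval !cls1_sval svalA. Qed.

Lemma left_unity_Lsum (lu : seq (S * G)) (p : L tm) :
  (forall a, \sum_(q <- lu) tm q.1 q.2 a = a) ->
  p = \big[@Ladd _ _ tm/Lzero tm]_(q <- lu) cls tm [:: (sval p q.1, q.2)].
Proof.
move=> lu1; apply: L_ext => a; rewrite Lsum_sval -{1}(lu1 a) sval_sum.
by apply: eq_bigr => q _; rewrite cls1_sval svalA.
Qed.

Lemma left_unity_Ladd_split (lu : seq (S * G)) (d : S -> S * S) (p : L tm) :
  (forall a, \sum_(q <- lu) tm q.1 q.2 a = a) -> (forall x, x = (d x).1 + (d x).2) ->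
  p = Ladd (\big[@Ladd _ _ tm/Lzero tm]_(q <- lu) cls tm [:: ((d (sval p q.1)).1, q.2)])
           (\big[@Ladd _ _ tm/Lzero tm]_(q <- lu) cls tm [:: ((d (sval p q.1)).2, q.2)]).
Proof.
move=> lu1 dK; apply: L_ext => a.
rewrite {1}(left_unity_Lsum p lu1) Ladd_sval !Lsum_sval -big_split /=.
by apply: eq_bigr => q _; rewrite !opfun1 -tmDl -dK.
Qed.

End LeftOperatorSemiring.

Section FuzzyReal.
Variable R : realType.

Lemma inf_image_le (T : Type) (F : T -> R) b t :
  (forall t, b <= F t) -> inf [set F t | t in [set: T]] <= F t.
Proof. by move=> Fb; apply: ge_inf; [exists b => _ [u _ <-] | exists t]. Qed.

Lemma le_inf_image (T : Type) (F : T -> R) (t0 : T) c :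
  (forall t, c <= F t) -> c <= inf [set F t | t in [set: T]].
Proof. by move=> cF; apply: lb_le_inf; [exists (F t0), t0 | move=> _ [t _ <-]]. Qed.

Lemma inf_image_cst (T : Type) (t0 : T) (c : R) : inf [set c | _ in [set: T]] = c.
Proof.
by apply/eqP; rewrite eq_le (inf_image_le (b := c)) // (le_inf_image t0).
Qed.

Lemma le_big_fuzzy (T I : Type) (op : T -> T -> T) (idx : T) (f : T -> R)
    (r : seq I) (F : I -> T) c :
  f idx = 1 -> (forall x y, Num.min (f x) (f y) <= f (op x y)) ->
  c <= 1 -> (forall i, c <= f (F i)) -> c <= f (\big[op/idx]_(i <- r) F i).
Proof.
move=> f_idx f_op c1 cF; elim/big_ind: _ => // [|x y cx cy]; first by rewrite f_idx.
by apply: le_trans (f_op x y); rewrite le_min cx cy.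
Qed.

Lemma nonconstant_cancel (A B : Type) (b0 : B)
    (f : (A -> R) -> B -> R) (g : (B -> R) -> A -> R) (m : A -> R) :
  (forall c, g (fun=> c) = fun=> c) -> g (f m) = m ->
  nonconstant m -> nonconstant (f m).
Proof.
move=> g_cst fK [x [y mxy]]; apply: contrapT => fm_cst; apply: mxy.
have fm_b0 : f m = fun=> f m b0.
  by apply: funext => b; apply: contrapT => fb; apply: fm_cst; exists b, b0.
by rewrite -fK fm_b0 g_cst.
Qed.

End FuzzyReal.

Section FuzzyIdeals.
Variables (S G : nmodType) (tm : S -> G -> S -> S) (R : realType).

Section OfS.
Variable s : S -> R.
Hypothesis Hs : FI_S tm s.

Lemma FI_S_ge0 x : 0 <= s x. Proof. by case: Hs => /(_ x) /andP[]. Qed.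
Lemma FI_S_le1 x : s x <= 1. Proof. by case: Hs => /(_ x) /andP[]. Qed.
Lemma FI_S_0 : s 0 = 1. Proof. by case: Hs. Qed.
Lemma FI_S_add x y : Num.min (s x) (s y) <= s (x + y). Proof. by case: Hs. Qed.
Lemma FI_S_tml x al y : s x <= s (tm x al y).
Proof. by case: Hs => _ _ _ /(_ x y al) []. Qed.
Lemma FI_S_tmr x al y : s y <= s (tm x al y).
Proof. by case: Hs => _ _ _ /(_ x y al) []. Qed.

Lemma FI_S_sval (p : L tm) a : s a <= s (sval p a).
Proof.
rewrite svalE; apply: (le_big_fuzzy _ FI_S_0 FI_S_add) => // [|q].
  exact: FI_S_le1.
exact: FI_S_tmr.
Qed.

End OfS.

Section OfL.
Variable m : L tm -> R.
Hypothesis Hm : FI_L tm m.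

Lemma FI_L_ge0 p : 0 <= m p. Proof. by case: Hm => /(_ p) /andP[]. Qed.
Lemma FI_L_le1 p : m p <= 1. Proof. by case: Hm => /(_ p) /andP[]. Qed.
Lemma FI_L_0 : m (Lzero tm) = 1. Proof. by case: Hm. Qed.
Lemma FI_L_add p q : Num.min (m p) (m q) <= m (Ladd p q). Proof. by case: Hm. Qed.
Lemma FI_L_mull p q : m p <= m (Lmul p q).
Proof. by case: Hm => _ _ _ /(_ p q) []. Qed.
Lemma FI_L_mulr p q : m q <= m (Lmul p q).
Proof. by case: Hm => _ _ _ /(_ p q) []. Qed.

End OfL.

End FuzzyIdeals.

Section Correspondence.
Variables (S G : nmodType) (tm : S -> G -> S -> S) (R : realType).
Hypothesis HS : gamma_semiring_zero tm.

Lemma plus'_le (s : S -> R) p a :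
  (forall x, 0 <= s x) -> plus' tm s p <= s (sval p a).
Proof. by move=> s_ge0; apply: (inf_image_le (b := 0)). Qed.

Lemma le_plus' (s : S -> R) p c :
  (forall a, c <= s (sval p a)) -> c <= plus' tm s p.
Proof. exact: (le_inf_image (0 : S)). Qed.

Lemma plus_le (m : L tm -> R) x g :
  (forall p, 0 <= m p) -> plus tm m x <= m (cls tm [:: (x, g)]).
Proof. by move=> m_ge0; apply: (inf_image_le (b := 0)). Qed.

Lemma le_plus (m : L tm -> R) x c :
  (forall g, c <= m (cls tm [:: (x, g)])) -> c <= plus tm m x.
Proof. exact: (le_inf_image (0 : G)). Qed.

Lemma plus'_cst (c : R) : plus' tm (fun=> c) = fun=> c.
Proof. by apply: funext => p; exact: (inf_image_cst (0 : S)). Qed.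

Lemma plus_cst (c : R) : plus tm (fun _ : L tm => c) = fun=> c.
Proof. by apply: funext => x; exact: (inf_image_cst (0 : G)). Qed.

Section OfS.
Variable s : S -> R.
Hypothesis Hs : FI_S tm s.

Lemma plus'_ge0 p : 0 <= plus' tm s p.
Proof. by apply: le_plus' => a; exact: (FI_S_ge0 Hs). Qed.

Lemma plus'_le1 p : plus' tm s p <= 1.
Proof. exact: le_trans (plus'_le p 0 (FI_S_ge0 Hs)) (FI_S_le1 Hs _). Qed.

Lemma plus'_cls1 x g : s x <= plus' tm s (cls tm [:: (x, g)]).
Proof. by apply: le_plus' => a; rewrite cls1_sval; exact: (FI_S_tml Hs). Qed.

Lemma plus'_Lzero : plus' tm s (Lzero tm) = 1.
Proof.
apply/eqP; rewrite eq_le plus'_le1; apply: le_plus' => a.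
by rewrite (Lzero_sval HS) (FI_S_0 Hs).
Qed.

Lemma FI_L_plus' : FI_L tm (plus' tm s).
Proof.
have s_ge0 := FI_S_ge0 Hs.
split=> [p | | p q | p q |]; last exact: plus'_Lzero.
- by rewrite plus'_ge0 plus'_le1.
- by exists (Lzero tm); rewrite plus'_Lzero oner_neq0.
- apply: le_plus' => a; rewrite Ladd_sval; apply: le_trans (FI_S_add Hs _ _).
  by rewrite le_min !ge_min !plus'_le ?orbT.
- split; apply: le_plus' => a; rewrite (Lmul_sval HS).
    exact: le_trans (plus'_le q a s_ge0) (FI_S_sval Hs _ _).
  exact: plus'_le.
Qed.

Lemma plus_plus' : has_right_unity tm -> plus tm (plus' tm s) = s.
Proof.
move=> [ru ru1]; apply: funext => x; apply/eqP; rewrite eq_le; apply/andP; split.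
  rewrite -{2}(ru1 x); apply: (le_big_fuzzy _ (FI_S_0 Hs) (FI_S_add Hs)).
    exact: le_trans (plus_le x 0 plus'_ge0) (plus'_le1 _).
  move=> q; apply: le_trans (plus_le x q.1 plus'_ge0) _.
  by apply: le_trans (plus'_le _ q.2 (FI_S_ge0 Hs)) _; rewrite cls1_sval.
by apply: le_plus => g; apply: plus'_cls1.
Qed.

Lemma le_plus'_Lsum (I : Type) (r : seq I) (x : I -> S) (g : I -> G) c :
  c <= 1 -> (forall i, c <= s (x i)) ->
  c <= plus' tm s (\big[@Ladd _ _ tm/Lzero tm]_(i <- r) cls tm [:: (x i, g i)]).
Proof.
move=> c1 cx; apply: (le_big_fuzzy _ plus'_Lzero (FI_L_add FI_L_plus')) => // i.
exact: le_trans (cx i) (plus'_cls1 _ _).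
Qed.

Lemma nonconstant_plus' :
  has_right_unity tm -> nonconstant s -> nonconstant (plus' tm s).
Proof.
by move=> ru; apply: (nonconstant_cancel (Lzero tm) plus_cst); apply: plus_plus'.
Qed.

End OfS.

Section OfL.
Variable m : L tm -> R.
Hypothesis Hm : FI_L tm m.

Lemma plus_ge0 x : 0 <= plus tm m x.
Proof. by apply: le_plus => g; exact: (FI_L_ge0 Hm). Qed.

Lemma plus_le1 x : plus tm m x <= 1.
Proof. exact: le_trans (plus_le x 0 (FI_L_ge0 Hm)) (FI_L_le1 Hm _). Qed.

Lemma FI_S_plus : FI_S tm (plus tm m).
Proof.
have m_ge0 := FI_L_ge0 Hm.
have plus0 : plus tm m 0 = 1.
  apply/eqP; rewrite eq_le plus_le1; apply: le_plus => g.
  by rewrite (cls10 HS) (FI_L_0 Hm).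
split=> [x | | x y | x y al |]; last exact: plus0.
- by rewrite plus_ge0 plus_le1.
- by exists 0; rewrite plus0 oner_neq0.
- apply: le_plus => g; rewrite (cls1D HS); apply: le_trans (FI_L_add Hm _ _).
  by rewrite le_min !ge_min !plus_le ?orbT.
- split; apply: le_plus => g; rewrite (cls1_tm HS).
    exact: le_trans (plus_le y g m_ge0) (FI_L_mulr Hm _ _).
  exact: le_trans (plus_le x al m_ge0) (FI_L_mull Hm _ _).
Qed.

Lemma plus'_plus : has_left_unity tm -> plus' tm (plus tm m) = m.
Proof.
move=> [lu lu1]; apply: funext => p; apply/eqP; rewrite eq_le; apply/andP; split.
  rewrite {2}(left_unity_Lsum HS p lu1).
  apply: (le_big_fuzzy _ (FI_L_0 Hm) (FI_L_add Hm)).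
    exact: le_trans (plus'_le p 0 plus_ge0) (plus_le1 _).
  move=> q; apply: le_trans (plus'_le p q.1 plus_ge0) _.
  exact: plus_le (FI_L_ge0 Hm).
apply: le_plus' => a; apply: le_plus => g.
by rewrite (cls1_sval_mul HS); apply: (FI_L_mull Hm).
Qed.

Lemma nonconstant_plus :
  has_left_unity tm -> nonconstant m -> nonconstant (plus tm m).
Proof. by move=> lu; apply: (nonconstant_cancel 0 plus'_cst); apply: plus'_plus. Qed.

End OfL.

Lemma plus'_capf (s1 s2 : S -> R) : FI_S tm s1 -> FI_S tm s2 ->
  plus' tm (capf s1 s2) = capf (plus' tm s1) (plus' tm s2).
Proof.
move=> Hs1 Hs2; have s1_ge0 := FI_S_ge0 Hs1; have s2_ge0 := FI_S_ge0 Hs2.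
have cap_ge0 x : 0 <= capf s1 s2 x by rewrite /capf le_min s1_ge0 s2_ge0.
apply: funext => p; apply/eqP; rewrite eq_le; apply/andP; split.
  by rewrite [X in _ <= X]/capf le_min; apply/andP; split; apply: le_plus' => a;
    apply: le_trans (plus'_le p a cap_ge0) _; rewrite /capf ge_min lexx ?orbT.
apply: le_plus' => a.
by rewrite /capf le_min !ge_min !plus'_le ?orbT.
Qed.

Lemma subf_plus' (s1 s2 : S -> R) : (forall x, 0 <= s1 x) ->
  subf s1 s2 -> subf (plus' tm s1) (plus' tm s2).
Proof.
move=> s1_ge0 s12 p; apply: le_plus' => a.
exact: le_trans (plus'_le p a s1_ge0) (s12 _).
Qed.

Lemma subf_plus (m1 m2 : L tm -> R) : (forall p, 0 <= m1 p) ->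
  subf m1 m2 -> subf (plus tm m1) (plus tm m2).
Proof.
move=> m1_ge0 m12 x; apply: le_plus => g.
exact: le_trans (plus_le x g m1_ge0) (m12 _).
Qed.

End Correspondence.

Section Oplus.
Variables (S G : nmodType) (tm : S -> G -> S -> S) (R : realType).
Hypothesis HS : gamma_semiring_zero tm.
Variables s1 s2 : S -> R.
Hypotheses (Hs1 : FI_S tm s1) (Hs2 : FI_S tm s2).

Let decomp x := [set r | exists u v, x = u + v /\ r = Num.min (s1 u) (s2 v)].

Lemma has_sup_decomp x : has_sup (decomp x).
Proof.
split; first by exists (Num.min (s1 x) (s2 0)), x, 0; rewrite addr0.
by exists 1 => _ [u [v [_ ->]]]; rewrite ge_min (FI_S_le1 Hs1).
Qed.

Lemma oplusS_ge u v : Num.min (s1 u) (s2 v) <= oplusS s1 s2 (u + v).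
Proof. by apply: ub_le_sup; [case: (has_sup_decomp (u + v)) | exists u, v]. Qed.

Lemma oplusS_le1 x : oplusS s1 s2 x <= 1.
Proof.
apply: ge_sup; first by case: (has_sup_decomp x).
by move=> _ [u [v [_ ->]]]; rewrite ge_min (FI_S_le1 Hs1).
Qed.

Lemma oplusS_approx x e : 0 < e ->
  exists uv : S * S, x = uv.1 + uv.2 /\
    oplusS s1 s2 x - e < Num.min (s1 uv.1) (s2 uv.2).
Proof.
move=> e_gt0; have [_ [u [v [-> ->]]] lt_e] := sup_adherent e_gt0 (has_sup_decomp x).
by exists (u, v).
Qed.

Lemma oplusL_ge (m1 m2 : L tm -> R) : (forall p, m1 p <= 1) ->
  forall p q, Num.min (m1 p) (m2 q) <= oplusL tm m1 m2 (Ladd p q).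
Proof.
move=> m1_le1 p q; apply: ub_le_sup; last by exists p, q.
by exists 1 => _ [u [v [_ ->]]]; rewrite ge_min m1_le1.
Qed.

Lemma plus'_oplusS : has_left_unity tm ->
  plus' tm (oplusS s1 s2) = oplusL tm (plus' tm s1) (plus' tm s2).
Proof.
move=> [lu lu1]; have s1_ge0 := FI_S_ge0 Hs1; have s2_ge0 := FI_S_ge0 Hs2.
have oplus_ge0 x : 0 <= oplusS s1 s2 x.
  have := oplusS_ge x 0; rewrite addr0; apply: le_trans.
  by rewrite le_min s1_ge0 s2_ge0.
apply: funext => p; apply/eqP; rewrite eq_le; apply/andP; split; last first.
  apply: ge_sup.
    exists (Num.min (plus' tm s1 p) (plus' tm s2 (Lzero tm))), p, (Lzero tm).
    by split=> //; apply: L_ext => a; rewrite Ladd_sval (Lzero_sval HS) addr0.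
  move=> _ [u [v [-> ->]]]; apply: le_plus' => a; rewrite Ladd_sval.
  apply: le_trans (oplusS_ge _ _).
  by rewrite le_min !ge_min !plus'_le ?orbT.
set c := plus' tm _ p; apply/ler_addgt0Pr => e e_gt0; rewrite -lerBlDr.
have [d dP] := choice (fun x => oplusS_approx x e_gt0).
rewrite (left_unity_Ladd_split HS p lu1 (fun x => (dP x).1)).
apply: le_trans (oplusL_ge _ (plus'_le1 Hs1) _ _).
have ce_le (q : S * G) :
    c - e <= Num.min (s1 (d (sval p q.1)).1) (s2 (d (sval p q.1)).2).
  apply/ltW/(le_lt_trans _ (dP _).2); rewrite lerD2r.
  exact: plus'_le oplus_ge0.
have ce_le1 : c - e <= 1.
  apply: le_trans (oplusS_le1 (sval p 0)); apply: le_trans (plus'_le p 0 oplus_ge0).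
  by rewrite lerBlDr lerDl ltW.
rewrite le_min; apply/andP; split.
  apply: (le_plus'_Lsum HS Hs1) => // q.
  by apply: le_trans (ce_le q) _; rewrite ge_min lexx.
apply: (le_plus'_Lsum HS Hs2) => // q.
by apply: le_trans (ce_le q) _; rewrite ge_min lexx orbT.
Qed.

End Oplus.

Theorem proposition3p3 (S G : nmodType) (tm : S -> G -> S -> S) (R : realType)
  (HS : gamma_semiring_zero tm)
  (Hlu : has_left_unity tm) (Hru : has_right_unity tm)
  (s s1 s2 : S -> R) (m m1 m2 : L tm -> R)
  (Hs : FI_S tm s) (Hs1 : FI_S tm s1) (Hs2 : FI_S tm s2)
  (Hm : FI_L tm m) (Hm1 : FI_L tm m1) (Hm2 : FI_L tm m2) :
     (FI_L tm (plus' tm s) /\ (nonconstant s -> nonconstant (plus' tm s))) /\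
      plus tm (plus' tm s) = s /\
      (s1 <> s2 -> plus' tm s1 <> plus' tm s2) /\
      plus' tm (oplusS s1 s2) = oplusL tm (plus' tm s1) (plus' tm s2) /\
      plus' tm (capf s1 s2) = capf (plus' tm s1) (plus' tm s2) /\
      (subf s1 s2 -> subf (plus' tm s1) (plus' tm s2)) /\
      (FI_S tm (plus tm m) /\ (nonconstant m -> nonconstant (plus tm m))) /\
      plus' tm (plus tm m) = m /\
      (subf m1 m2 -> subf (plus tm m1) (plus tm m2)).
Proof.
split; first by split; [exact: FI_L_plus' | exact: nonconstant_plus'].
split; first exact: plus_plus'.
split; first by move=> s12 /(congr1 (plus tm)); rewrite !plus_plus'.
split; first exact: plus'_oplusS.
split; first exact: plus'_capf.
split; first exact: subf_plus' (FI_S_ge0 Hs1).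
split; first by split; [exact: FI_S_plus | exact: nonconstant_plus].
split; first exact: plus'_plus.
exact: subf_plus (FI_L_ge0 Hm1).
Qed.
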